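(* Let $\mathbb{L}/\mathbb{K}$ be a finite Galois extension of degree $N$ with Galois group $G$, let $a\in\mathbb{L}[G]$, let $\mathcal{B}=(\beta_1,\dots,\beta_N)$ be a $\mathbb{K}$-basis of $\mathbb{L}$, and set $\mathbf{v}=(a(\beta_1),\dots,a(\beta_N))$. Then \[\mathrm{rk}_\mathbb{K}(a)=\dim_\mathbb{L}\big(\mathbb{L}[G]/\mathrm{Ann}_{\mathbb{L}[G]}(a)\big)=\mathrm{rk}_\mathbb{L}(M_G(\mathbf{v}))=\mathrm{rk}_\mathbb{L}(D_G(a)).\]
   Context: $\mathbb{L}[G]=\{\sum_ga_gg:a_g\in\mathbb{L}\}$ with composition product $(ag)\circ(bh)=(a\,g(b))(gh)$; $a$ acts on $\mathbb{L}$ by $x\mapsto\sum a_gg(x)$ and $\mathrm{rk}_\mathbb{K}(a)$ is the rank of this $\mathbb{K}$-linear map. $\mathrm{Ann}_{\mathbb{L}[G]}(a)=\{f\in\mathbb{L}[G]:f\circ a=0\}$. With $G=\{g_1,\dots,g_N\}$ ordered, $M_G(\mathbf{v})=(g_i(v_j))_{i,j}$ is the $G$-Moore matrix and $D_G(a)$ is the $G$-Dickson matrix with entries $D_G(a)_{g,h}=h(a_{h^{-1}g})$ (rows/columns indexed by $G$). *)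

From HB Require Import structures.
From mathcomp Require Import all_boot all_order all_algebra all_fingroup all_field.
Set Implicit Arguments. Unset Strict Implicit. Unset Printing Implicit Defensive.
Import GRing.Theory.
Local Open Scope ring_scope.

(* G = gal_of {:L}, the group of F-automorphisms of L,
   i.e. 'Gal({:L} / 1).  Mathcomp's group law on gal_of is written
   "diagrammatically": (x * y)%g a = y (x a); so the paper's g∘h is (h * g)%g. *)

Section SkewGroupAlgebra.
Variables (F : fieldType) (L : splittingFieldType F).

Notation G := (gal_of (fullv : {vspace L})).

(* 𝕃[G] : formal sums \sum_g a_g g, an L-vector space (left scalars). *)
Definition LG := {ffun G -> L^o}.

Definition LGact (a : LG) (x : L) : L := \sum_(g : G) a g * g x.

Definition LGend (a : LG) : 'End(L) := linfun (LGact a).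

Definition rkK (a : LG) : nat := \dim (limg (LGend a)).

(* composition product: (f ∘ b)_k = \sum_{g∘h = k} f_g g(b_h) *)
Definition LGcomp (f b : LG) : LG :=
  [ffun k : G => \sum_(g : G) \sum_(h : G | (h * g)%g == k) f g * g (b h)].

Definition Ann (a : LG) : {vspace LG} := lker (linfun (fun f : LG => LGcomp f a)).

Definition dimQuotAnn (a : LG) : nat := (\dim (fullv : {vspace LG}) - \dim (Ann a))%N.

Definition gidx (i : 'I_#|{: G}|) : G := enum_val i.

Definition MooreG n (v : n.-tuple L) : 'M[L]_(#|{: G}|, n) :=
  \matrix_(i, j) (gidx i) (tnth v j).

(* G-Dickson matrix D_G(a)_{g,h} = h(a_{h^{-1} g}), h^{-1}∘g = (g * h^-1)%g *)
Definition DicksonG (a : LG) : 'M[L]_#|{: G}| :=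
  \matrix_(i, j) (gidx j) (a ((gidx i) * (gidx j)^-1)%g).

End SkewGroupAlgebra.

(* All four quantities are reduced to rank D_G(a) or to rank M_G(a(beta)):
   - Artin's independence of characters shows that the G-Moore matrix of an
     F-linearly free tuple has full column rank; writing an arbitrary tuple w
     in a basis of its F-span then gives  rank M_G(w) = dim_F <<w>>.
     Applied to w = a(beta) this identifies rk_F(a) with rank M_G(a(beta)).
   - Expanding g(a(beta_j)) = \sum_h g(a_h) (g h)(beta_j) yields the
     factorisation M_G(a(beta)) = D_G(a)^T M_G(beta), and M_G(beta) has full
     row rank because beta is a basis and |G| = dim_F L.  Hence
     rank M_G(a(beta)) = rank D_G(a).
   - The map f |-> f o a is L-linear with kernel Ann(a); its image is spanned
     by the images of the point masses delta_g, which are the rows of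
     D_G(a)^T.  Hence dim (L[G]/Ann(a)) = rank D_G(a). *)

From HB Require Import structures.
From mathcomp Require Import all_boot all_order all_algebra all_fingroup all_field.
Set Implicit Arguments. Unset Strict Implicit. Unset Printing Implicit Defensive.
Local Open Scope ring_scope.
Import GRing.Theory.

Lemma LGact_linear (F : fieldType) (L : splittingFieldType F) (a : LG L) :
  linear (LGact a).
Proof.
move=> c x y; rewrite /LGact scaler_sumr -big_split; apply: eq_bigr => g _ /=.
by rewrite linearP /= mulrDr scalerAr.
Qed.

HB.instance Definition _ (F : fieldType) (L : splittingFieldType F) (a : LG L) :=
  GRing.isSemilinear.Build F L L _ (LGact a) (GRing.semilinear_linear (LGact_linear a)).

Definition LGcompr (F : fieldType) (L : splittingFieldType F) (a f : LG L) : LG L :=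
  LGcomp f a.

Lemma LGcompr_linear (F : fieldType) (L : splittingFieldType F) (a : LG L) :
  linear (LGcompr a).
Proof.
move=> c f h; apply/ffunP => k; rewrite /LGcompr /LGcomp !ffunE.
rewrite scaler_sumr -big_split; apply: eq_bigr => g _ /=.
rewrite scaler_sumr -big_split; apply: eq_bigr => x _ /=.
by rewrite !ffunE mulrDl scalerAl.
Qed.

HB.instance Definition _ (F : fieldType) (L : splittingFieldType F) (a : LG L) :=
  GRing.isSemilinear.Build L (LG L) (LG L) _ (LGcompr a)
    (GRing.semilinear_linear (LGcompr_linear a)).

Lemma span_rows_dim (K : fieldType) (vT : vectType K) m n (A : 'M[K]_(m, n))
  (phi : {linear 'rV[K]_n -> vT}) : injective phi ->
  \dim <<[seq phi (row i A) | i <- enum 'I_m]>> = \rank A.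
Proof.
move=> phiI; set B := row_base A.
pose X := [tuple phi (row k B) | k < \rank A].
have phi_mul p (c : 'rV_p) (M : 'M_(p, n)) :
    phi (c *m M) = \sum_k c 0 k *: phi (row k M).
  by rewrite mulmx_sum_row linear_sum; apply: eq_bigr => k _; rewrite linearZ.
have -> : <<[seq phi (row i A) | i <- enum 'I_m]>>%VS = <<X>>%VS.
  apply/eqP; rewrite eqEsubv; apply/andP; split; apply/span_subvP => y.
    case/mapP => i _ ->.
    have /submxP[D ->] : (row i A <= B)%MS by rewrite eq_row_base row_sub.
    rewrite phi_mul; apply: rpred_sum => k _; apply/memvZ/memv_span.
    by rewrite -[phi _](tnth_mktuple (fun k => phi (row k B))) mem_tnth.
  case/tnthP => k ->; rewrite tnth_mktuple.
  have /submxP[D ->] : (row k B <= A)%MS by rewrite -(eq_row_base A) row_sub.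
  rewrite phi_mul; apply: rpred_sum => i _; apply/memvZ/memv_span.
  by apply: map_f; rewrite mem_enum.
suff /eqP : free X by rewrite size_tuple.
apply/freeP => c Xc0 k.
have : \row_i c i *m B = 0 *m B.
  apply: phiI; rewrite mul0mx linear0 phi_mul -[RHS]Xc0; apply: eq_bigr => i _.
  by rewrite mxE -tnth_nth tnth_mktuple.
by move/(row_free_inj (row_base_free A))/rowP/(_ k); rewrite !mxE.
Qed.

Section RanksInSkewGroupAlgebra.

Variables (F : fieldType) (L : splittingFieldType F).
Hypothesis galL : galois 1%AS (fullv : {vspace L}).

Notation G := (gal_of (fullv : {vspace L})).

Definition gtrace (y : L) : L := \sum_(g : G) g y.

Lemma gal_full (g : G) : g \in 'Gal(fullv / 1%AS)%g.
Proof. by rewrite gal_kAut ?sub1v // kAut1E limg_gal. Qed.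

Lemma card_gal_full : #|{: G}| = \dim (fullv : {vspace L}).
Proof.
have := galois_dim galL; rewrite dimv1 divn1 => ->.
suff -> : 'Gal(fullv / 1%AS)%g = [set: G] by rewrite cardsT.
by apply/setP => g; rewrite inE gal_full.
Qed.

Lemma galVK (g : G) (b : L) : (g^-1)%g (g b) = b.
Proof. by rewrite -galM ?memvf // mulgV gal_id. Qed.

(* Dedekind: the trace is not identically zero. *)
Lemma gtrace_neq0 : exists y : L, gtrace y != 0.
Proof.
have [y _ Hy] := @gal_independent_contra F L fullv predT (fun _ => 1) 1%g isT (oner_neq0 _).
by exists y; move: Hy; under eq_bigr do rewrite mul1r.
Qed.

Lemma gtrace_in_base y : gtrace y \in 1%VS.
Proof.
have := mem_galTrace galL (memvf y); rewrite /galTrace.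
by rewrite (eq_bigl predT) // => g; rewrite gal_full.
Qed.

(* Averaging the equations \sum_k g(b_k) x_k over g^-1 gives a relation with
   coefficients gtrace(x_k) among the b_k. *)
Lemma sum_galV_trace d (b : d.-tuple L) (x : 'I_d -> L) :
  \sum_(g : G) (g^-1)%g (\sum_k g (tnth b k) * x k) =
  \sum_k tnth b k * gtrace (x k).
Proof.
under eq_bigr => g _ do rewrite rmorph_sum /=.
under eq_bigr => g _ do under eq_bigr => k _ do rewrite rmorphM /= galVK.
rewrite exchange_big /=; apply: eq_bigr => k _.
rewrite /gtrace mulr_sumr (reindex_inj invg_inj) /=.
by apply: eq_bigr => g _; rewrite invgK.
Qed.

Lemma gal_free_independent d (b : d.-tuple L) (x : 'I_d -> L) : free b ->
  (forall g : G, \sum_k g (tnth b k) * x k = 0) -> forall k, x k = 0.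
Proof.
move=> freeb Hx.
have trace_zero lam k : gtrace (lam * x k) = 0.
  have rel0 : \sum_k tnth b k * gtrace (lam * x k) = 0.
    rewrite -sum_galV_trace; apply: big1 => g _.
    under eq_bigr do rewrite mulrCA.
    by rewrite -mulr_sumr Hx mulr0 rmorph0.
  have /fin_all_exists[c Dc] : forall k, exists c : F, gtrace (lam * x k) = c%:A.
    by move=> k'; have /vlineP[c ->] := gtrace_in_base (lam * x k'); exists c.
  have /freeP/(_ c) c0 := freeb.
  rewrite Dc c0 ?scale0r // -[RHS]rel0; apply: eq_bigr => k' _.
  by rewrite Dc mulr_algr (tnth_nth 0).
move=> k; apply/eqP; apply: contraT => nzx.
have [y Hy] := gtrace_neq0.
by move: Hy; rewrite -(divfK nzx y) trace_zero eqxx.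
Qed.

Lemma MooreG_free_rank d (b : d.-tuple L) : free b -> \rank (MooreG b) = d.
Proof.
move=> freeb; apply/eqP; rewrite eqn_leq rank_leq_col /= -mxrank_tr.
suff: row_free (MooreG b)^T by rewrite /row_free => /eqP ->.
rewrite -kermx_eq0; apply/rowV0P => u /sub_kermxP uM0.
apply/rowP => k; rewrite mxE.
apply: (gal_free_independent freeb (x := fun k => u 0 k)) => g.
move/matrixP/(_ 0 (enum_rank g)): uM0; rewrite !mxE => uM0; rewrite -[RHS]uM0.
by apply: eq_bigr => k' _; rewrite !mxE /gidx enum_rankK mulrC.
Qed.

Lemma MooreG_comb n m (w : n.-tuple L) (u : m.-tuple L) (c : 'I_m -> 'I_n -> F) :
  (forall j, tnth w j = \sum_k c k j *: tnth u k) ->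
  MooreG w = MooreG u *m \matrix_(k, j) (c k j)%:A.
Proof.
move=> Dw; apply/matrixP => i j; rewrite !mxE Dw linear_sum.
by apply: eq_bigr => k _; rewrite linearZ /= !mxE mulr_algr.
Qed.

Lemma MooreG_rank n (w : n.-tuple L) : \rank (MooreG w) = \dim <<w>>.
Proof.
 set b := vbasis <<w>>%VS.
have rank_b : \rank (MooreG b) = \dim <<w>>%VS.
  exact/MooreG_free_rank/basis_free/vbasisP.
have w_in_b j : tnth w j = \sum_k coord b k (tnth w j) *: tnth b k.
  rewrite {1}(coord_vbasis (memv_span (mem_tnth j w))).
  by apply: eq_bigr => k _; rewrite -tnth_nth.
have b_in_w k : tnth b k = \sum_j coord w j (tnth b k) *: tnth w j.
  rewrite {1}(coord_span (vbasis_mem (mem_tnth k b))).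
  by apply: eq_bigr => j _; rewrite -tnth_nth.
apply/eqP; rewrite eqn_leq; apply/andP; split.
  by rewrite (MooreG_comb w_in_b); apply: leq_trans (mxrankM_maxl _ _) _; rewrite rank_b.
by rewrite -rank_b {1}(MooreG_comb b_in_w) mxrankM_maxl.
Qed.

Lemma rkK_span (a : LG L) d (beta : d.-tuple L) : basis_of fullv beta ->
  rkK a = \dim <<[tuple of map (LGact a) beta]>>.
Proof.
case/andP=> /eqP span_beta _.
rewrite /rkK -span_beta limg_span; congr (\dim <<_>>).
by apply: eq_map => x; rewrite lfunE.
Qed.

Lemma MooreG_act (a : LG L) n (beta : n.-tuple L) :
  MooreG [tuple of map (LGact a) beta] = (DicksonG a)^T *m MooreG beta.
Proof.
apply/matrixP => i j; rewrite !mxE tnth_map /LGact rmorph_sum /=.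
rewrite (reindex_inj (mulIg (gidx i)^-1)%g) /=.
rewrite (reindex (@gidx F L)) /=; last first.
  by exists (@enum_rank _) => g _; [exact: enum_valK | exact: enum_rankK].
apply: eq_bigr => k _; rewrite !mxE rmorphM /=.
by rewrite -galM ?memvf // mulgKV.
Qed.

Definition LG_of_row (r : 'rV[L]_#|{: G}|) : LG L := [ffun g => r 0 (enum_rank g)].

Lemma LG_of_row_linear : linear LG_of_row.
Proof. by move=> c r s; apply/ffunP => g; rewrite !ffunE !mxE. Qed.

HB.instance Definition _ :=
  GRing.isSemilinear.Build L _ (LG L) _ LG_of_row
    (GRing.semilinear_linear LG_of_row_linear).

Lemma LG_of_row_inj : injective LG_of_row.
Proof.
move=> r s /ffunP Ers; apply/rowP => i.
by have := Ers (gidx i); rewrite !ffunE /gidx enum_valK.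
Qed.

Definition delta (g : G) : LG L := [ffun h => (h == g)%:R].

Lemma delta_decomp (f : LG L) : f = \sum_i f (gidx i) *: delta (gidx i).
Proof.
apply/ffunP => h; rewrite sum_ffunE (bigD1 (enum_rank h)) //= big1 ?addr0.
  by rewrite !ffunE /gidx enum_rankK eqxx [_ *: _]mulr1.
move=> i ne; rewrite !ffunE /gidx.
case: eqP => [Eh|_]; last by rewrite scaler0.
by move: ne; rewrite Eh enum_valK eqxx.
Qed.

Lemma LGcomp_delta (a : LG L) i :
  LGcomp (delta (gidx i)) a = LG_of_row (row i (DicksonG a)^T).
Proof.
apply/ffunP => k; rewrite !ffunE !mxE.
rewrite (bigD1 (gidx i)) //= [X in _ + X]big1 ?addr0; last first.
  by move=> g ne; apply: big1 => h _; rewrite ffunE (negbTE ne) mul0r.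
rewrite ffunE eqxx (big_pred1 (k * (gidx i)^-1)%g); last first.
  by move=> h /=; apply/eqP/eqP => [<-|->]; [rewrite mulgK | rewrite mulgKV].
by rewrite mul1r /gidx enum_rankK.
Qed.

(* dim (L[G]/Ann(a)) = rank D_G(a): the image of f |-> f o a is spanned by the
   rows of D_G(a)^T. *)
Lemma dimQuotAnn_Dickson (a : LG L) : dimQuotAnn a = \rank (DicksonG a).
Proof.
pose psi := linfun (LGcompr a).
have psiE f : psi f = LGcomp f a by rewrite lfunE.
have -> : dimQuotAnn a = \dim (limg psi).
  by rewrite /dimQuotAnn -(limg_ker_dim psi fullv) capfv addKn.
rewrite -mxrank_tr -(span_rows_dim (DicksonG a)^T LG_of_row_inj).
congr (\dim _); apply/eqP; rewrite eqEsubv; apply/andP; split.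
  apply/subvP => y /memv_imgP [f _ ->].
  rewrite [f]delta_decomp linear_sum; apply: rpred_sum => i _.
  rewrite linearZ /= psiE LGcomp_delta; apply/memvZ/memv_span.
  by apply: map_f; rewrite mem_enum.
apply/span_subvP => y /mapP [i _ ->]; apply/memv_imgP.
by exists (delta (gidx i)); rewrite ?memvf // psiE LGcomp_delta.
Qed.

End RanksInSkewGroupAlgebra.

Unset Implicit Arguments.

Theorem mainTheorem8 (F : fieldType) (L : splittingFieldType F)
  (HG : galois 1%AS (fullv : {vspace L}))
  (a : LG L) (beta : (\dim (fullv : {vspace L})).-tuple L)
  (Hbeta : basis_of fullv beta) :
  let v := [tuple of map (LGact a) beta] in
  rkK a = dimQuotAnn a /\
  dimQuotAnn a = \rank (MooreG v) /\
  \rank (MooreG v) = \rank (DicksonG a).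
Proof.
move=> v.
have rkK_Moore : rkK a = \rank (MooreG v).
  by rewrite (rkK_span a Hbeta) (MooreG_rank HG).
have Moore_Dickson : \rank (MooreG v) = \rank (DicksonG a).
  rewrite MooreG_act mxrankMfree ?mxrank_tr // /row_free.
  by rewrite (MooreG_free_rank HG (basis_free Hbeta)) (card_gal_full HG).
by rewrite dimQuotAnn_Dickson rkK_Moore Moore_Dickson.
Qed.
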